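(* Let $F$ be a non-archimedean local field over a dyadic place $\mathfrak{p}$, with valuation ring $\mathfrak{o}$, and let $H\cong End(V)$ be a split quaternion algebra over $F$ ($V$ a $2$-dimensional $F$-vector space) with an orthogonal involution $\ddagger$. Let $\lambda\in disc(\ddagger)\cap\mathfrak{o}$ with $\lambda\mathfrak{o}=\iota(disc(\ddagger))$, and suppose $\mathfrak{d}(-\lambda)\neq\mathfrak{p}$. Let $\mathcal{O}$ be a maximal $\ddagger$-order. Then there exist a fractional ideal $\mathfrak{a}$ of $F$ and an $\mathfrak{a}$-modular lattice $\Lambda\subset V$ such that $$\mathcal{O}=End(\Lambda)\cap End(\Lambda^\sharp).$$ Additionally, $disc(\mathcal{O})=disc(H)\cap\iota(disc(\ddagger))=\mathfrak{o}$.
   Context: Orthogonal involution: $F$-linear anti-automorphism of order $2$ with $3$-dimensional $+1$-eigenspace. Orders are $\mathfrak{o}$-lattice subrings with $1$ spanning $H$; a $\ddagger$-order satisfies $\mathcal{O}^\ddagger=\mathcal{O}$; a maximal $\ddagger$-order is not properly contained in another $\ddagger$-order. $b_\ddagger$ is a nondegenerate symmetric bilinear form on $V$ (fixed up to scaling) with $b_\ddagger(v,\sigma w)=b_\ddagger(\sigma^\ddagger v,w)$. Lattices: finitely generated $\mathfrak{o}$-submodules spanning $V$; $\Lambda^\sharp=\{v:b_\ddagger(v,\Lambda)\subset\mathfrak{o}\}$; $End(\Lambda)=\{\sigma:\sigma\Lambda\subset\Lambda\}$. For a fractional ideal $\mathfrak{a}$, $\Lambda$ is $\mathfrak{a}$-modular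 if $\Lambda=\mathfrak{a}\Lambda^\sharp$. $disc(\mathcal{O})$ = reduced discriminant, $disc(H)=\mathfrak{o}$ (split). $disc(\ddagger)=nrd(h)(F^\times)^2$ for nonzero $h$ with $h^\ddagger=-h$; $\iota([\mu])$ = ideal of $\mathfrak{o}$ generated by $[\mu]\cap\mathfrak{o}$. Quadratic defect: $\mathfrak{d}(\alpha)=\bigcap_{\xi\in F}(\alpha-\xi^2)\mathfrak{o}$. *)

From HB Require Import structures.
From mathcomp Require Import all_boot all_order all_algebra.
Set Implicit Arguments. Unset Strict Implicit. Unset Printing Implicit Defensive.
Import Order.TTheory GRing.Theory Num.Theory.
Local Open Scope ring_scope.

Section Local.
Variable F : fieldType.
(* v is a (normalized) discrete valuation on F^x; its value at 0 is irrelevant. *)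
Variable v : F -> int.

Definition is_dvaluation : Prop :=
  [/\ forall x y, x != 0 -> y != 0 -> v (x * y) = v x + v y,
      forall x y, x != 0 -> y != 0 -> x + y != 0 -> Num.min (v x) (v y) <= v (x + y)
    & exists pi : F, pi != 0 /\ v pi = 1].

Definition inO (x : F) : Prop := x = 0 \/ 0 <= v x.
Definition inP (x : F) : Prop := x = 0 \/ 1 <= v x.

Definition vclose (x y : F) (n : int) : Prop := x = y \/ n <= v (x - y).

Definition vcauchy (u : nat -> F) : Prop :=
  forall n : int, exists N, forall i j, (N <= i)%N -> (N <= j)%N -> vclose (u i) (u j) n.
Definition vconverges (u : nat -> F) (l : F) : Prop :=
  forall n : int, exists N, forall i, (N <= i)%N -> vclose (u i) l n.

(* non-archimedean local field: complete discretely valued field with finite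
   residue field *)
Definition is_nonarch_local_field : Prop :=
  [/\ is_dvaluation,
      forall u, vcauchy u -> exists l, vconverges u l
    & exists s : seq F, (forall y, y \in s -> inO y) /\
        forall x, inO x -> exists2 y, y \in s & inP (x - y)].

(* the place p is dyadic: p | 2 (and char F = 0, i.e. 2 <> 0) *)
Definition dyadic : Prop := (2 : F) != 0 /\ inP 2.

Definition is_lattice (m n : nat) (L : 'M[F]_(m, n) -> Prop) : Prop :=
  exists (k : nat) (g : 'I_k -> 'M[F]_(m, n)),
    (forall x, L x <-> exists c : 'I_k -> F, (forall i, inO (c i)) /\
                                              x = \sum_(i < k) c i *: g i)
    /\ (forall x, exists c : 'I_k -> F, x = \sum_(i < k) c i *: g i).

(* H = End(V) with V = F^2 (column vectors), H = 'M[F]_2 *)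
Definition is_order (O : 'M[F]_2 -> Prop) : Prop :=
  [/\ is_lattice O, O 1 & forall x y, O x -> O y -> O (x * y)].

Definition is_orth_involution (inv : 'M[F]_2 -> 'M[F]_2) : Prop :=
  [/\ forall (a : F) x y, inv (a *: x + y) = a *: inv x + inv y,
      forall x y, inv (x * y) = inv y * inv x,
      forall x, inv (inv x) = x
    & \rank (eigenspace (lin_mx inv) 1) = 3%N].

Definition is_inv_order (inv : 'M[F]_2 -> 'M[F]_2) (O : 'M[F]_2 -> Prop) : Prop :=
  is_order O /\ (forall y, O y <-> exists x, O x /\ y = inv x).

Definition is_max_inv_order (inv : 'M[F]_2 -> 'M[F]_2) (O : 'M[F]_2 -> Prop) : Prop :=
  is_inv_order inv O /\
  forall O', is_inv_order inv O' -> (forall x, O x -> O' x) -> forall x, O' x -> O x.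

Definition bform (B : 'M[F]_2) (x y : 'cV[F]_2) : F := (x^T *m B *m y) 0 0.

Definition is_adjoint_form (inv : 'M[F]_2 -> 'M[F]_2) (B : 'M[F]_2) : Prop :=
  [/\ B^T = B, B \in unitmx &
      forall (s : 'M[F]_2) x y, bform B x (s *m y) = bform B (inv s *m x) y].

Definition dual_lattice (B : 'M[F]_2) (L : 'cV[F]_2 -> Prop) (x : 'cV[F]_2) : Prop :=
  forall y, L y -> inO (bform B x y).

Definition EndL (L : 'cV[F]_2 -> Prop) (s : 'M[F]_2) : Prop :=
  forall x, L x -> L (s *m x).

(* Lambda is a-modular for the fractional ideal a = alpha o:
   Lambda = a Lambda^# = alpha Lambda^# *)
Definition modular (B : 'M[F]_2) (alpha : F) (L : 'cV[F]_2 -> Prop) : Prop :=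
  forall x, L x <-> exists y, dual_lattice B L y /\ x = alpha *: y.

(* disc(ddagger) = nrd(h) (F^x)^2, h nonzero skew *)
Definition in_disc (inv : 'M[F]_2 -> 'M[F]_2) (y : F) : Prop :=
  exists h : 'M[F]_2, [/\ h != 0, inv h = - h &
    exists mu : F, mu != 0 /\ y = \det h * mu ^+ 2].

Definition gen_ideal (S : F -> Prop) (x : F) : Prop :=
  exists (k : nat) (c s : 'I_k -> F),
    [/\ forall i, inO (c i), forall i, S (s i) & x = \sum_(i < k) c i * s i].

Definition iota_disc (inv : 'M[F]_2 -> 'M[F]_2) : F -> Prop :=
  gen_ideal (fun y => in_disc inv y /\ inO y).

Definition ideal_mul (a b : F -> Prop) : F -> Prop :=
  gen_ideal (fun y => exists s t, [/\ a s, b t & y = s * t]).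

Definition qdefect (alpha : F) (x : F) : Prop :=
  forall xi : F, exists c, inO c /\ x = (alpha - xi ^+ 2) * c.

Definition disc_order (O : 'M[F]_2 -> Prop) : F -> Prop :=
  gen_ideal (fun y => exists a : 'I_4 -> 'M[F]_2,
     (forall i, O (a i)) /\ y = \det (\matrix_(i, j) \tr (a i * a j))).

Definition is_reduced_disc (O : 'M[F]_2 -> Prop) (d : F -> Prop) : Prop :=
  forall x, disc_order O x <-> ideal_mul d d x.

End Local.

(* Writing lambda = det(h) mu^2 with h skew for the involution, B h is a skew-symmetric
   2x2 matrix, so det B = rho^2 / lambda.  The discriminant lambda is a unit: it is
   integral, v(lambda) <= 1 because lambda generates the ideal of integral discriminants,
   and v(lambda) = 1 would make the quadratic defect of -lambda equal to p.

   A maximal order O stabilises the lattice O e1 + O e2 and, being stable under the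
   involution, also its dual.  In a basis of this lattice compare the valuations of the
   entries of the Gram matrix of B.  If a diagonal entry g divides the others, completing
   the square (possible as lambda is a unit, using that O also stabilises the dual) gives
   an O-stable lattice with Gram matrix g diag(1, lambda^-1); otherwise the Gram matrix is
   t [[r1, 1], [1, r2]] with r1, r2 in p.  In both cases O stabilises a lattice N whose
   Gram matrix is c times an element of GL_2(o), i.e. N is c-modular, and End(N) is an
   order stable under the involution containing O; by maximality O = End(N), which is
   conjugate to M_2(o) and has discriminant o. *)

From HB Require Import structures.
From mathcomp Require Import all_boot all_order all_algebra.
From mathcomp Require Import perm ring zify.
Set Implicit Arguments. Unset Strict Implicit. Unset Printing Implicit Defensive.
Import Order.TTheory GRing.Theory Num.Theory.
Local Open Scope ring_scope.

Section Matrix2.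
Variable R : comPzRingType.

Definition mx2 (a b c d : R) : 'M[R]_2 :=
  \matrix_(i, j) if i == 0 :> nat then (if j == 0 :> nat then a else b)
                 else (if j == 0 :> nat then c else d).
Definition col2 (a b : R) : 'cV[R]_2 := \col_i if i == 0 :> nat then a else b.

Lemma ord2P (i : 'I_2) : i = ord0 \/ i = ord_max.
Proof. by case: i => [[|[|//]]] ?; [left|right]; apply: val_inj. Qed.

Lemma big_ord2 (V : nmodType) (f : 'I_2 -> V) : \sum_i f i = f ord0 + f ord_max.
Proof. by rewrite big_ord_recr big_ord1 /=; congr (f _ + _); apply: val_inj. Qed.

Lemma mx2E (M : 'M[R]_2) :
  M = mx2 (M ord0 ord0) (M ord0 ord_max) (M ord_max ord0) (M ord_max ord_max).
Proof. by apply/matrixP => i j; rewrite !mxE; case: (ord2P i) => ->; case: (ord2P j) => ->. Qed.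

Lemma col2E (x : 'cV[R]_2) : x = col2 (x ord0 ord0) (x ord_max ord0).
Proof. by apply/matrixP => i j; rewrite !mxE (ord1 j); case: (ord2P i) => ->. Qed.

Lemma mx2_inj a b c d a' b' c' d' :
  mx2 a b c d = mx2 a' b' c' d' -> [/\ a = a', b = b', c = c' & d = d'].
Proof.
move=> e; have entry i j := congr1 (fun M : 'M[R]_2 => M i j) e.
by move: (entry ord0 ord0) (entry ord0 ord_max) (entry ord_max ord0) (entry ord_max ord_max);
  rewrite !mxE.
Qed.

Lemma mx2_1 : 1%:M = mx2 1 0 0 1.
Proof. by apply/matrixP => i j; rewrite !mxE; case: (ord2P i) => ->; case: (ord2P j) => ->. Qed.

Lemma add_mx2 a b c d a' b' c' d' :
  mx2 a b c d + mx2 a' b' c' d' = mx2 (a + a') (b + b') (c + c') (d + d').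
Proof. by apply/matrixP => i j; rewrite !mxE; case: (ord2P i) => ->; case: (ord2P j) => ->. Qed.

Lemma opp_mx2 a b c d : - mx2 a b c d = mx2 (- a) (- b) (- c) (- d).
Proof. by apply/matrixP => i j; rewrite !mxE; case: (ord2P i) => ->; case: (ord2P j) => ->. Qed.

Lemma scale_mx2 k a b c d : k *: mx2 a b c d = mx2 (k * a) (k * b) (k * c) (k * d).
Proof. by apply/matrixP => i j; rewrite !mxE; case: (ord2P i) => ->; case: (ord2P j) => ->. Qed.

Lemma mul_mx2 a b c d a' b' c' d' :
  mx2 a b c d *m mx2 a' b' c' d' =
  mx2 (a * a' + b * c') (a * b' + b * d') (c * a' + d * c') (c * b' + d * d').
Proof.
apply/matrixP => i j; rewrite !mxE big_ord2 !mxE.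
by case: (ord2P i) => ->; case: (ord2P j) => ->.
Qed.

Lemma mul_mx2_col2 a b c d x y :
  mx2 a b c d *m col2 x y = col2 (a * x + b * y) (c * x + d * y).
Proof. by apply/matrixP => i j; rewrite !mxE big_ord2 !mxE; case: (ord2P i) => ->. Qed.

Lemma tr_mx2 a b c d : (mx2 a b c d)^T = mx2 a c b d.
Proof. by apply/matrixP => i j; rewrite !mxE; case: (ord2P i) => ->; case: (ord2P j) => ->. Qed.

Lemma det_mx2 a b c d : \det (mx2 a b c d) = a * d - b * c.
Proof.
rewrite (expand_det_row _ ord0) big_ord2 /cofactor !mxE /= !det_mx11 !mxE /=.
by rewrite add0n expr0 expr1; ring.
Qed.

Lemma mxtrace_mx2 a b c d : \tr (mx2 a b c d) = a + d.
Proof. by rewrite /mxtrace big_ord2 !mxE. Qed.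

Lemma mx2_skew a b c d : GRing.lreg (2 : R) ->
  (mx2 a b c d)^T = - mx2 a b c d -> [/\ a = 0, d = 0 & c = - b].
Proof.
move=> reg2; rewrite tr_mx2 opp_mx2 => /mx2_inj [ea ecb _ ed].
have self_opp (x : R) : x = - x -> x = 0.
  by move=> ex; apply: reg2; rewrite mulr0 mulr_natl mulr2n {2}ex subrr.
by split; [apply: self_opp | apply: self_opp | exact: ecb].
Qed.

Definition q0 : 'I_4 := @Ordinal 4 0 isT.
Definition q1 : 'I_4 := @Ordinal 4 1 isT.
Definition q2 : 'I_4 := @Ordinal 4 2 isT.
Definition q3 : 'I_4 := @Ordinal 4 3 isT.

Lemma ord4P (k : 'I_4) : [\/ k = q0, k = q1, k = q2 | k = q3].
Proof.
by case: k => [[|[|[|[|//]]]] ?]; [constructor 1|constructor 2|constructor 3|constructor 4];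
  apply: val_inj.
Qed.

Lemma big_ord4 (V : nmodType) (f : 'I_4 -> V) : \sum_k f k = f q0 + f q1 + f q2 + f q3.
Proof.
rewrite !big_ord_recr big_ord0 /= add0r.
by congr (f _ + f _ + f _ + f _); apply: val_inj.
Qed.

Definition unit_mx2 (k : 'I_4) : 'M[R]_2 :=
  match nat_of_ord k with
  | 0 => mx2 1 0 0 0 | 1 => mx2 0 1 0 0 | 2 => mx2 0 0 1 0 | _ => mx2 0 0 0 1
  end.

Definition coord_mx2 (M : 'M[R]_2) (k : 'I_4) : R :=
  match nat_of_ord k with
  | 0 => M ord0 ord0 | 1 => M ord0 ord_max | 2 => M ord_max ord0 | _ => M ord_max ord_max
  end.

Lemma sum_unit_mx2 (c : 'I_4 -> R) : \sum_k c k *: unit_mx2 k = mx2 (c q0) (c q1) (c q2) (c q3).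
Proof. by rewrite big_ord4 /unit_mx2 /= !scale_mx2 !add_mx2; congr mx2; ring. Qed.

Lemma coord_mx2K M : mx2 (coord_mx2 M q0) (coord_mx2 M q1) (coord_mx2 M q2) (coord_mx2 M q3) = M.
Proof. by rewrite -mx2E. Qed.

Lemma trace_form_unit_mx2 :
  \matrix_(j, l) \tr (unit_mx2 j *m unit_mx2 l) = perm_mx (tperm q1 q2) :> 'M[R]_4.
Proof.
have t0 : tperm q1 q2 q0 = q0 by rewrite tpermD.
have t3 : tperm q1 q2 q3 = q3 by rewrite tpermD.
apply/matrixP => j l; rewrite !mxE.
by case: (ord4P j) => ->; case: (ord4P l) => ->;
  rewrite ?t0 ?t3 ?tpermL ?tpermR /unit_mx2 /= mul_mx2 mxtrace_mx2; ring.
Qed.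

Lemma det_trace_form_unit_mx2 :
  \det (\matrix_(j, l) \tr (unit_mx2 j *m unit_mx2 l) : 'M[R]_4) = -1.
Proof. by rewrite trace_form_unit_mx2 det_perm odd_tperm /= expr1. Qed.

End Matrix2.

Arguments unit_mx2 {R} k.

(* Occurrences of [v x] may differ in their (convertible) structure instances, which
   lia would take for distinct atoms; [set] abstracts them up to conversion. *)
Ltac dval_lia v :=
  intros; repeat match goal with H : context [v _] |- _ => revert H end;
  repeat match goal with |- context [v ?x] =>
    let a := fresh "va" in set a := v x; clearbody a end;
  intros; lia.

Ltac field_nz := field; rewrite ?(andbT, andTb) //; repeat (apply/andP; split) => //.

Section DiscreteValuation.
Variables (F : fieldType) (v : F -> int).
Hypothesis hv : is_dvaluation v.
Notation O := (inO v).
Notation Pp := (inP v).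

Lemma dvalM x y : x != 0 -> y != 0 -> v (x * y) = v x + v y.
Proof. by case: hv => h _ _; apply: h. Qed.

Lemma dvalD x y : x != 0 -> y != 0 -> x + y != 0 -> v x <= v (x + y) \/ v y <= v (x + y).
Proof. by case: hv => _ h _ x0 y0 xy0; move: (h _ _ x0 y0 xy0); rewrite ge_min => /orP. Qed.

Lemma dval1 : v 1 = 0.
Proof. by have := dvalM (oner_neq0 F) (oner_neq0 F); rewrite mulr1; dval_lia v. Qed.

Lemma dvalN x : v (- x) = v x.
Proof.
have [->|x0] := eqVneq x 0; first by rewrite oppr0.
have N10 : (-1 : F) != 0 by rewrite oppr_eq0 oner_eq0.
have := dvalM N10 N10; rewrite mulrNN mulr1 dval1 => vN1.
by rewrite -mulN1r dvalM //; dval_lia v.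
Qed.

Lemma dvalV x : x != 0 -> v x^-1 = - v x.
Proof.
move=> x0; have := dvalM x0 (invr_neq0 x0).
by rewrite mulfV // dval1; dval_lia v.
Qed.

Lemma inO0 : O 0. Proof. by left. Qed.
Lemma inO1 : O 1. Proof. by right; rewrite dval1. Qed.

Lemma inON x : O x -> O (- x).
Proof. by case=> [->|h]; [left; rewrite oppr0 | right; rewrite dvalN]. Qed.

Lemma inO_dval x : x != 0 -> O x -> 0 <= v x.
Proof. by move=> x0 [x_0|//]; rewrite x_0 eqxx in x0. Qed.

Lemma inP_dval x : x != 0 -> Pp x -> 1 <= v x.
Proof. by move=> x0 [x_0|//]; rewrite x_0 eqxx in x0. Qed.

Lemma inOM x y : O x -> O y -> O (x * y).
Proof.
have [->|x0] := eqVneq x 0; first by left; rewrite mul0r.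
have [->|y0] := eqVneq y 0; first by left; rewrite mulr0.
by move=> /(inO_dval x0) hx /(inO_dval y0) hy; right; rewrite dvalM //; dval_lia v.
Qed.

Lemma inPM x y : Pp x -> O y -> Pp (x * y).
Proof.
have [->|x0] := eqVneq x 0; first by left; rewrite mul0r.
have [->|y0] := eqVneq y 0; first by left; rewrite mulr0.
by move=> /(inP_dval x0) hx /(inO_dval y0) hy; right; rewrite dvalM //; dval_lia v.
Qed.

Lemma inOD x y : O x -> O y -> O (x + y).
Proof.
have [->|x0] := eqVneq x 0; first by rewrite add0r.
have [->|y0] := eqVneq y 0; first by rewrite addr0.
have [->|xy0] := eqVneq (x + y) 0; first by left.
move=> /(inO_dval x0) hx /(inO_dval y0) hy; right.
by case: (dvalD x0 y0 xy0); dval_lia v.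
Qed.

Lemma inOB x y : O x -> O y -> O (x - y).
Proof. by move=> hx hy; apply/inOD/inON. Qed.

Lemma inP_inO x : Pp x -> O x.
Proof. by case=> [->|h]; [left | right; dval_lia v]. Qed.

Lemma inO_invr x : x != 0 -> v x = 0 -> O x^-1.
Proof. by move=> x0 vx; right; rewrite dvalV // vx. Qed.

Lemma inO_sqr t : O (t * t) -> O t.
Proof.
have [->|t0] := eqVneq t 0; first by left.
by move/(inO_dval (mulf_neq0 t0 t0)); rewrite dvalM //; right; dval_lia v.
Qed.

Lemma inO_dvd_total p q : (exists2 r, O r & q = p * r) \/ (exists2 r, Pp r & p = q * r).
Proof.
have [->|p0] := eqVneq p 0; first by right; exists 0; [left | rewrite mulr0].
have [->|q0] := eqVneq q 0; first by left; exists 0; [left | rewrite mulr0].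
case: (lerP (v p) (v q)) => h; [left; exists (q / p) | right; exists (p / q)];
  rewrite 1?[_ * (_ / _)]mulrC ?divfK //; right; rewrite dvalM ?invr_neq0 // dvalV //;
  dval_lia v.
Qed.

Lemma inP_subr1_inv z : Pp z -> z - 1 != 0 /\ O (z - 1)^-1.
Proof.
move=> hz; have z10 : z - 1 != 0.
  by rewrite subr_eq0; apply/eqP => z1; move: hz; rewrite z1 => -[/eqP|]; rewrite ?oner_eq0 ?dval1.
split=> //; right; rewrite dvalV //.
have [->|z0] := eqVneq z 0; first by rewrite sub0r dvalN dval1.
have nz0 : - z != 0 by rewrite oppr_eq0.
have s0 : (z - 1) + - z != 0 by rewrite addrAC subrr sub0r oppr_eq0 oner_eq0.
have := dvalD z10 nz0 s0; have := inP_dval z0 hz.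
by rewrite addrAC subrr sub0r dvalN dvalN dval1; dval_lia v.
Qed.

End DiscreteValuation.

Section TriangularSpan.
Variables (F : fieldType) (v : F -> int).
Hypothesis hv : is_dvaluation v.
Notation O := (inO v).

Definition tri_span (a b d z0 z1 : F) : Prop :=
  exists y1 y2, [/\ O y1, O y2, z0 = y1 * a & z1 = y1 * b + y2 * d].

Lemma inO_span2_principal d e : exists d', forall z,
  (exists2 y, O y & z = y * d') <-> exists y1 y2, [/\ O y1, O y2 & z = y1 * d + y2 * e].
Proof.
case: (inO_dvd_total hv d e) => [[r hr ->]|[r /inP_inO hr ->]]; [exists d | exists e].
- move=> z; split=> [[y hy ->]|[y1 [y2 [h1 h2 ->]]]].
    by exists y, 0; split; rewrite ?mul0r ?addr0 //; apply: inO0.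
  by exists (y1 + y2 * r); [apply/(inOD hv)/(inOM hv) | ring].
- move=> z; split=> [[y hy ->]|[y1 [y2 [h1 h2 ->]]]].
    by exists 0, y; split; rewrite ?mul0r ?add0r //; apply: inO0.
  by exists (y1 * r + y2); [apply/(inOD hv)/h2/(inOM hv) | ring].
Qed.

Lemma tri_span_cons a b d x0 x1 : exists a' b' d', forall z0 z1, tri_span a' b' d' z0 z1 <->
  exists y1 y2 c, [/\ O y1, O y2, O c, z0 = y1 * a + c * x0 & z1 = y1 * b + y2 * d + c * x1].
Proof.
case: (inO_dvd_total hv a x0) => [[r hr ex0]|[r /inP_inO hr ea]].
- have [d' hd'] := inO_span2_principal d (x1 - r * b).
  exists a, b, d' => z0 z1; split.
  + case=> y1 [y [h1 hy -> ->]].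
    have /hd' [y1' [y2' [h1' h2' ->]]] : exists2 y', O y' & y * d' = y' * d' by exists y.
    exists (y1 - y2' * r), y1', y2'; split=> //; rewrite ?ex0; try ring.
    by apply/(inOB hv)/(inOM hv).
  + case=> y1 [y2 [c [h1 h2 hc -> ->]]].
    have [y hy e] : exists2 y, O y & y2 * d + c * (x1 - r * b) = y * d'.
      by apply/hd'; exists y2, c.
    exists (y1 + c * r), y; split; [exact/(inOD hv)/(inOM hv) | done | rewrite ex0; ring | ].
    by rewrite -addrA -e; ring.
- have [d' hd'] := inO_span2_principal d (b - r * x1).
  exists x0, x1, d' => z0 z1; split.
  + case=> y1 [y [h1 hy -> ->]].
    have /hd' [y1' [y2' [h1' h2' ->]]] : exists2 y', O y' & y * d' = y' * d' by exists y.
    exists y2', y1', (y1 - y2' * r); split=> //; rewrite ?ea; try ring.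
    by apply/(inOB hv)/(inOM hv).
  + case=> y1 [y2 [c [h1 h2 hc -> ->]]].
    have [y hy e] : exists2 y, O y & y2 * d + y1 * (b - r * x1) = y * d'.
      by apply/hd'; exists y2, y1.
    exists (y1 * r + c), y; split; [exact/(inOD hv)/hc/(inOM hv) | done | rewrite ea; ring | ].
    by rewrite -e; ring.
Qed.

(* A triangular o-basis of a finitely generated o-submodule of F^2 (Hermite normal form). *)
Lemma tri_span_big n (w0 w1 : 'I_n -> F) a b d : exists a' b' d', forall z0 z1,
  tri_span a' b' d' z0 z1 <-> exists y1 y2 (c : 'I_n -> F), [/\ O y1, O y2, forall i, O (c i),
     z0 = y1 * a + \sum_i c i * w0 i & z1 = y1 * b + y2 * d + \sum_i c i * w1 i].
Proof.
elim: n w0 w1 a b d => [|n IHn] w0 w1 a b d.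
  exists a, b, d => z0 z1; split.
  - case=> y1 [y2 [h1 h2 -> ->]]; exists y1, y2, (fun _ => 0).
    by split=> //; [case | rewrite big_ord0 addr0 | rewrite big_ord0 addr0].
  - by case=> y1 [y2 [c [h1 h2 _ -> ->]]]; exists y1, y2; rewrite !big_ord0 !addr0.
have [a1 [b1 [d1 hs]]] := tri_span_cons a b d (w0 ord0) (w1 ord0).
have [a' [b' [d' hI]]] := IHn (w0 \o lift ord0) (w1 \o lift ord0) a1 b1 d1.
exists a', b', d' => z0 z1; rewrite hI; split.
- case=> y1 [y2 [c [h1 h2 hc -> ->]]].
  have /hs [y1' [y2' [c0 [h1' h2' hc0 e0 e1]]]] :
    tri_span a1 b1 d1 (y1 * a1) (y1 * b1 + y2 * d1) by exists y1, y2.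
  exists y1', y2', (fun i => if unlift ord0 i is Some j then c j else c0).
  split=> //; first by move=> i; case: (unlift ord0 i).
  + rewrite big_ord_recl unlift_none e0 addrA; congr (_ + _).
    by apply: eq_bigr => i _; rewrite liftK.
  + rewrite big_ord_recl unlift_none e1 addrA; congr (_ + _).
    by apply: eq_bigr => i _; rewrite liftK.
- case=> y1 [y2 [c [h1 h2 hc -> ->]]].
  have [y1' [y2' [h1' h2' e0 e1]]] :
      tri_span a1 b1 d1 (y1 * a + c ord0 * w0 ord0) (y1 * b + y2 * d + c ord0 * w1 ord0).
    by apply/hs; exists y1, y2, (c ord0).
  exists y1', y2', (c \o lift ord0); split=> //.
  + by move=> i; apply: hc.
  + by rewrite big_ord_recl addrA e0.
  + by rewrite big_ord_recl addrA e1.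
Qed.

End TriangularSpan.

Section BasisLattice.
Variables (F : fieldType) (v : F -> int).
Hypothesis hv : is_dvaluation v.
Notation O := (inO v).

Definition intmx m n (M : 'M[F]_(m, n)) : Prop := forall i j, O (M i j).

Definition mxlattice (Q : 'M[F]_2) (x : 'cV[F]_2) : Prop := exists2 y, intmx y & x = Q *m y.

Lemma intmx_mul m n p (A : 'M[F]_(m, n)) (C : 'M[F]_(n, p)) :
  intmx A -> intmx C -> intmx (A *m C).
Proof.
move=> hA hC i j; rewrite mxE; apply: (big_ind O) => [|x y|k _]; first exact: inO0.
  exact: inOD.
exact: inOM.
Qed.

Lemma intmx_delta m n (i : 'I_m) (j : 'I_n) : intmx (delta_mx i j).
Proof. by move=> a b; rewrite mxE; case: (_ && _); [apply: inO1 | apply: inO0]. Qed.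

Lemma intmx_tr m n (M : 'M[F]_(m, n)) : intmx M -> intmx M^T.
Proof. by move=> h i j; rewrite mxE. Qed.

Lemma intmx_mx2 a b c d : intmx (mx2 a b c d) <-> [/\ O a, O b, O c & O d].
Proof.
split=> [h|[ha hb hc hd] i j].
  by move: (h ord0 ord0) (h ord0 ord_max) (h ord_max ord0) (h ord_max ord_max); rewrite !mxE.
by rewrite mxE; case: (ord2P i) => ->; case: (ord2P j) => ->.
Qed.

Lemma intmx_det n (A : 'M[F]_n) : intmx A -> O (\det A).
Proof.
have signO k : O ((-1) ^+ k).
  by elim: k => [|k IHk]; rewrite ?expr0 ?exprS; [apply: inO1 | apply/inOM/IHk/inON/inO1].
move=> hA; apply: (big_ind O) => [|x y|s _]; [exact: inO0 | exact: inOD | ].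
apply: inOM => //; apply: (big_ind O) => [|x y|i _]; [exact: inO1 | exact: inOM | exact: hA].
Qed.

Lemma intmx_trace n (A : 'M[F]_n) : intmx A -> O (\tr A).
Proof.
by move=> hA; apply: (big_ind O) => [|x y|i _]; [exact: inO0 | exact: inOD | exact: hA].
Qed.

Lemma mulmx_delta_col m n (M : 'M[F]_(m, n)) i j : (M *m delta_mx j (0 : 'I_1)) i 0 = M i j.
Proof. by rewrite -colE mxE. Qed.

Lemma EndL_mxlatticeP Q s : Q \in unitmx ->
  EndL (mxlattice Q) s <-> exists2 Y, intmx Y & s *m Q = Q *m Y.
Proof.
move=> Qu; split=> [hs|[Y hY eY] x [y hy ->]].
  exists (invmx Q *m s *m Q); last by rewrite !mulmxA mulmxV // mul1mx.
  move=> i j; have [y hy ey] : mxlattice Q (s *m (Q *m delta_mx j 0)).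
    by apply: hs; exists (delta_mx j 0) => //; apply: intmx_delta.
  by rewrite -mulmx_delta_col -!mulmxA ey mulmxA mulVmx // mul1mx; apply: hy.
by exists (Y *m y); [apply: intmx_mul | rewrite mulmxA eY mulmxA].
Qed.

Lemma mxlatticeP Q x : Q \in unitmx -> mxlattice Q x <-> intmx (invmx Q *m x).
Proof.
move=> Qu; split=> [[y hy ->]|hx]; first by rewrite mulmxA mulVmx // mul1mx.
by exists (invmx Q *m x) => //; rewrite mulmxA mulmxV // mul1mx.
Qed.

Lemma bformE (B : 'M[F]_2) x y : bform B x y = (x^T *m B *m y) ord0 ord0.
Proof. by rewrite /bform (ord1 0). Qed.

Lemma dual_mxlatticeP B Q x : B^T = B ->
  dual_lattice v B (mxlattice Q) x <-> intmx (Q^T *m B *m x).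
Proof.
move=> Bsym; have trE : (Q^T *m B *m x)^T = x^T *m B *m Q by rewrite !trmx_mul trmxK Bsym mulmxA.
split=> [hx i j|hx y [z hz ->]].
  rewrite (ord1 j); have := hx (Q *m delta_mx i 0).
  rewrite bformE mulmxA -trE mulmx_delta_col mxE; apply.
  by exists (delta_mx i 0) => //; apply: intmx_delta.
by rewrite bformE mulmxA -trE; apply: intmx_mul => //; apply: intmx_tr.
Qed.

Lemma mxlattice_tri a b d x :
  mxlattice (mx2 a 0 b d) x <-> tri_span v a b d (x ord0 ord0) (x ord_max ord0).
Proof.
split=> [[y hy ->]|[y1 [y2 [h1 h2 ex0 ex1]]]].
  rewrite (col2E y) mul_mx2_col2 !mxE /=.
  by exists (y ord0 ord0), (y ord_max ord0); split=> //; ring.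
exists (col2 y1 y2); first by move=> i j; rewrite !mxE; case: (ord2P i) => ->.
by rewrite (col2E x) mul_mx2_col2 ex0 ex1; congr col2; ring.
Qed.

Lemma mxlattice_unitmx Q :
  mxlattice Q (delta_mx 0 0) -> mxlattice Q (delta_mx 1 0) -> Q \in unitmx.
Proof.
move=> [y0 _ e0] [y1 _ e1]; have e : Q *m row_mx y0 y1 = 1%:M.
  rewrite mul_mx_row -e0 -e1; apply/matrixP => i j; rewrite !mxE.
  case: splitP => k /= jk; rewrite {1}(ord1 k) !mxE andbT; congr ((i == _)%:R);
    by apply: val_inj; rewrite /= jk (ord1 k).
by case: (mulmx1_unit e).
Qed.

Lemma lattice0 m n (L : 'M[F]_(m, n) -> Prop) : is_lattice v L -> L 0.
Proof.
case=> k [g [hg _]]; apply/hg; exists (fun _ => 0); split=> [i|]; first exact: inO0.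
by rewrite big1 // => i _; rewrite scale0r.
Qed.

Lemma mxlattice_is_lattice Q : Q \in unitmx -> is_lattice v (mxlattice Q).
Proof.
move=> Qu; have colsum (c : 'I_2 -> F) :
    \sum_i c i *: (Q *m delta_mx i 0) = Q *m col2 (c ord0) (c ord_max).
  rewrite big_ord2 !scalemxAr -mulmxDr; congr (_ *m _); apply/matrixP => i j.
  by rewrite (ord1 j) !mxE; case: (ord2P i) => -> /=; rewrite ?mulr1 ?mulr0 ?addr0 ?add0r.
exists 2%N, (fun i => Q *m delta_mx i 0); split=> x.
  split=> [[y hy ->]|[c [hc ->]]].
    exists (fun i => y i 0); split; first by move=> i; apply: hy.
    by rewrite colsum -col2E.
  rewrite colsum; exists (col2 (c ord0) (c ord_max)) => //.
  by move=> i j; rewrite !mxE; case: (ord2P i) => ->; apply: hc.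
by exists (fun i => (invmx Q *m x) i 0); rewrite colsum -col2E mulmxA mulmxV // mul1mx.
Qed.

Lemma EndL_mxlattice_is_order Q : Q \in unitmx -> is_order v (EndL (mxlattice Q)).
Proof.
move=> Qu; have conjsum (c : 'I_4 -> F) :
    \sum_k c k *: (Q *m unit_mx2 k *m invmx Q) = Q *m mx2 (c q0) (c q1) (c q2) (c q3) *m invmx Q.
  rewrite -sum_unit_mx2 mulmx_sumr mulmx_suml; apply: eq_bigr => k _.
  by rewrite -scalemxAr -scalemxAl.
split=> [|x hx|a b ha hb x hx].
- exists 4%N, (fun k => Q *m unit_mx2 k *m invmx Q); split=> s.
    rewrite (EndL_mxlatticeP _ Qu); split=> [[Y hY eY]|[c [hc ->]]].
      exists (coord_mx2 Y); split; first by case=> [[|[|[|k]]] ?]; apply: hY.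
      by rewrite conjsum coord_mx2K -eY mulmxK.
    exists (mx2 (c q0) (c q1) (c q2) (c q3)); first by apply/intmx_mx2; split; apply: hc.
    by rewrite conjsum mulmxKV.
  exists (coord_mx2 (invmx Q *m s *m Q)).
  by rewrite conjsum coord_mx2K !mulmxA mulmxK // mulmxV // mul1mx.
- by rewrite mul1mx.
- by rewrite -[_ * _]/(a *m b) -mulmxA; apply/ha/hb.
Qed.

End BasisLattice.

Lemma mxtrace_conj (R : comUnitRingType) (Q a b Y Y' : 'M[R]_2) : Q \in unitmx ->
  a *m Q = Q *m Y -> b *m Q = Q *m Y' -> \tr (a *m b) = \tr (Y *m Y').
Proof.
move=> Qu ea eb; have conjE M N : M *m Q = Q *m N -> M = Q *m N *m invmx Q.
  by move=> e; rewrite -e -mulmxA mulmxV // mulmx1.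
rewrite (conjE _ _ ea) (conjE _ _ eb) -!mulmxA mxtrace_mulC -!mulmxA mulVmx // mulmx1.
by rewrite !mulmxA -(mulmxA Y) mulVmx // mulmx1.
Qed.

Section StableLattice.
Variables (F : fieldType) (v : F -> int).
Hypothesis hv : is_dvaluation v.
Variable B : 'M[F]_2.
Hypotheses (Bsym : B^T = B) (Bunit : B \in unitmx).

Lemma dual_mxlatticeE P : P \in unitmx ->
  forall x, dual_lattice v B (mxlattice v P) x <-> mxlattice v (invmx (P^T *m B)) x.
Proof.
move=> Pu x; have PBu : P^T *m B \in unitmx by rewrite unitmx_mul unitmx_tr Pu.
by rewrite dual_mxlatticeP // mxlatticeP ?unitmx_inv // invmxK.
Qed.

Lemma EndL_dual_mxlatticeP P s : P \in unitmx ->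
  EndL (dual_lattice v B (mxlattice v P)) s <->
  exists2 Z, intmx v Z & Z *m (P^T *m B) = P^T *m B *m s.
Proof.
move=> Pu; have PBu : P^T *m B \in unitmx by rewrite unitmx_mul unitmx_tr Pu.
have -> : EndL (dual_lattice v B (mxlattice v P)) s <-> EndL (mxlattice v (invmx (P^T *m B))) s.
  by split=> hs x /(dual_mxlatticeE Pu) /hs /(dual_mxlatticeE Pu).
rewrite EndL_mxlatticeP ?unitmx_inv //; split=> -[Z hZ eZ]; exists Z => //.
  by rewrite -(mulKVmx PBu Z) -eZ (mulmxA _ s) mulmxKV.
by rewrite -[RHS](mulmxK PBu) -(mulmxA (invmx _)) eZ mulKmx.
Qed.

Variable Ord : 'M[F]_2 -> Prop.

Definition order_span (x : 'cV[F]_2) : Prop :=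
  exists s t, [/\ Ord s, Ord t & x = col ord0 s + col ord_max t].

(* O e1 + O e2 is spanned by the first and the second columns of generators of O. *)
Lemma order_span_tri : is_order v Ord ->
  exists a b d, forall x, mxlattice v (mx2 a 0 b d) x <-> order_span x.
Proof.
case=> [[k [g [hg _]]] _ _].
have entry (c : 'I_k -> F) i j : (\sum_l c l *: g l) i j = \sum_l c l * g l i j.
  by rewrite summxE; apply: eq_bigr => l _; rewrite mxE.
have [a1 [b1 [d1 hs1]]] :=
  tri_span_big hv (fun l => g l ord0 ord0) (fun l => g l ord_max ord0) 0 0 0.
have [a2 [b2 [d2 hs2]]] :=
  tri_span_big hv (fun l => g l ord0 ord_max) (fun l => g l ord_max ord_max) a1 b1 d1.
exists a2, b2, d2 => x; rewrite mxlattice_tri hs2; split.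
- case=> y1 [y2 [c' [h1 h2 hc' ex0 ex1]]].
  have /hs1 [z1 [z2 [c [_ _ hc ez0 ez1]]]] :
    tri_span v a1 b1 d1 (y1 * a1) (y1 * b1 + y2 * d1) by exists y1, y2.
  exists (\sum_l c l *: g l), (\sum_l c' l *: g l).
  split; [by apply/hg; exists c | by apply/hg; exists c' |].
  rewrite (col2E x) (col2E (_ + _)) !mxE !entry ex0 ex1 ez0 ez1; congr col2; ring.
- case=> s [t [hs ht ->]].
  have [c [hc ->]] := (hg s).1 hs; have [c' [hc' ->]] := (hg t).1 ht.
  have [z1 [z2 [hz1 hz2 e0 e1]]] :
      tri_span v a1 b1 d1 (\sum_l c l * g l ord0 ord0) (\sum_l c l * g l ord_max ord0).
    by apply/hs1; exists 0, 0, c; split; rewrite ?mul0r ?add0r //; apply: inO0.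
  exists z1, z2, c'; rewrite !mxE !entry; split=> //; [rewrite e0 | rewrite e1]; ring.
Qed.

Definition stable_basis (P : 'M[F]_2) : Prop :=
  P \in unitmx /\ forall s, Ord s ->
    EndL (mxlattice v P) s /\ EndL (dual_lattice v B (mxlattice v P)) s.

Variable inv : 'M[F]_2 -> 'M[F]_2.
Hypothesis adjB : forall s x y, bform B x (s *m y) = bform B (inv s *m x) y.

Lemma exists_stable_basis : is_inv_order v inv Ord -> exists P, stable_basis P.
Proof.
move=> [hOrd invOrd]; have [/lattice0 Ord0 Ord1 OrdM] := hOrd.
have [a [b [d hP]]] := order_span_tri hOrd.
have stab s : Ord s -> EndL (mxlattice v (mx2 a 0 b d)) s.
  move=> hs x /hP [t [u [ht hu ->]]]; apply/hP; exists (s * t), (s * u).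
  by split; [apply: OrdM | apply: OrdM | rewrite mulmxDr !colE !mulmxA].
exists (mx2 a 0 b d); split=> [|s hs].
  apply: mxlattice_unitmx; apply/hP; [exists 1, 0 | exists 0, 1]; split=> //;
  by apply/matrixP => i j; rewrite (ord1 j) !mxE; case: (ord2P i) => ->; rewrite /= ?addr0 ?add0r.
split=> [|x hx y hy]; first exact: stab.
by have [t [ht ->]] := (invOrd s).1 hs; rewrite -adjB; apply/hx/stab.
Qed.

End StableLattice.

Section GramNormalisation.
Variables (F : fieldType) (v : F -> int).
Hypothesis hv : is_dvaluation v.
Notation O := (inO v).
Notation Pp := (inP v).
Variables (B : 'M[F]_2) (Ord : 'M[F]_2 -> Prop).
Hypotheses (Bsym : B^T = B) (Bunit : B \in unitmx).

Definition unimodular (W : 'M[F]_2) : Prop :=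
  intmx v W /\ exists2 W', intmx v W' & W *m W' = 1%:M.

Definition modular_basis (Q : 'M[F]_2) : Prop :=
  [/\ Q \in unitmx, exists c W, [/\ c != 0, unimodular W & Q^T *m B *m Q = c *: W]
    & forall s, Ord s -> EndL (mxlattice v Q) s].

Lemma unimodular_unitmx W : unimodular W -> W \in unitmx.
Proof. by case=> _ [W' _ /mulmx1_unit[]]. Qed.

Lemma mxlattice_mul_unimodular P U : unimodular U ->
  forall x, mxlattice v (P *m U) x <-> mxlattice v P x.
Proof.
move=> [hU [U' hU' UU']] x; split=> [[y hy ->]|[y hy ->]].
  by exists (U *m y); [apply: intmx_mul | rewrite mulmxA].
by exists (U' *m y); [apply: intmx_mul | rewrite -mulmxA (mulmxA U) UU' mul1mx].
Qed.

Lemma unimodular_swap : unimodular (mx2 0 1 1 0).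
Proof.
have iS : intmx v (mx2 0 1 1 0).
  by apply/intmx_mx2; split; (apply: inO0 || apply: (inO1 hv)).
by split=> //; exists (mx2 0 1 1 0) => //; rewrite mul_mx2 mx2_1; congr mx2; ring.
Qed.

Lemma stable_basis_unimodular P U : unimodular U ->
  stable_basis v B Ord P -> stable_basis v B Ord (P *m U).
Proof.
move=> hU [Pu stabP]; split=> [|s /stabP [sL sD]].
  by rewrite unitmx_mul Pu unimodular_unitmx.
have eL := mxlattice_mul_unimodular P hU.
split=> [x /eL /sL /eL //|x hx y /eL hy].
by apply: sD hy => z /eL; apply: hx.
Qed.

Variable lam : F.
Hypotheses (lam0 : lam != 0) (lamO : O lam) (lamVO : O lam^-1).

(* Y is U^-1 X U; its upper right entry is read off Z, which shows it integral. *)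
Lemma completed_square_conj g r q t (X Z : 'M[F]_2) :
  g != 0 -> t != 0 -> q = r * r + lam^-1 * t * t -> O r -> O t -> intmx v X -> intmx v Z ->
  Z *m mx2 g (g * r) (g * r) (g * q) = mx2 g (g * r) (g * r) (g * q) *m X ->
  exists2 Y, intmx v Y & X *m mx2 1 (- r / t) 0 (1 / t) = mx2 1 (- r / t) 0 (1 / t) *m Y.
Proof.
move=> g0 t0 hq hr ht; rewrite (mx2E X) (mx2E Z).
move: (X ord0 ord0) (X ord0 ord_max) (X ord_max ord0) (X ord_max ord_max) => x00 x01 x10 x11.
move: (Z ord0 ord0) (Z ord0 ord_max) (Z ord_max ord0) (Z ord_max ord_max) => z00 z01 z10 z11.
move=> /intmx_mx2 [h00 h01 h10 h11] /intmx_mx2 [k00 k01 k10 k11].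
rewrite !mul_mx2 => /mx2_inj [e00 e01 _ _].
exists (mx2 (x00 + r * x10) (z01 / lam * t) (t * x10) (x11 - r * x10)).
  apply/intmx_mx2; split; [apply/(inOD hv)/(inOM hv) | apply/(inOM hv)/ht/(inOM hv)
    | apply: (inOM hv) | apply/(inOB hv)/(inOM hv)] => //.
have hx00 : x00 = (g * x00 + g * r * x10) / g - r * x10 by field_nz.
have hx01 : x01 = (g * x01 + g * r * x11) / g - r * x11 by field_nz.
rewrite -e00 in hx00; rewrite -e01 in hx01.
by rewrite !mul_mx2 hx00 hx01; congr mx2; rewrite ?hq; field_nz.
Qed.

Variable rho : F.
Hypotheses (rho0 : rho != 0) (detB : \det B = rho ^+ 2 / lam).

(* Since det B = rho^2 / lam, the Gram matrix g [[1, r], [r, q]] has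
   q - r^2 = lam^-1 t^2 for t = det P rho / g, and t is integral as lam is. *)
Lemma completed_square_modular P g r q : stable_basis v B Ord P ->
  P^T *m B *m P = mx2 g (g * r) (g * r) (g * q) -> g != 0 -> O r -> O q ->
  exists Q, modular_basis Q.
Proof.
move=> [Pu stabP] hG g0 hr hq; have dP : \det P != 0 by rewrite -unitfE -unitmxE.
set t := \det P * rho / g; have t0 : t != 0 by rewrite !mulf_neq0 ?invr_eq0.
have hq' : q = r * r + lam^-1 * t * t.
  have e : g * (g * q) - g * r * (g * r) = \det P ^+ 2 * (rho ^+ 2 / lam).
    by rewrite -det_mx2 -hG !det_mulmx det_tr detB; ring.
  have -> : lam^-1 * t * t = (g * (g * q) - g * r * (g * r)) / (g * g) by rewrite e /t; field_nz.
  by field_nz.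
have tO : O t.
  apply: (inO_sqr hv); have -> : t * t = lam * (q - r * r) by rewrite hq'; field_nz.
  exact/(inOM hv)/(inOB hv)/(inOM hv).
set U := mx2 1 (- r / t) 0 (1 / t).
have PUu : P *m U \in unitmx.
  by rewrite unitmx_mul Pu unitmxE det_mx2 unitfE mul1r mulr0 subr0 div1r invr_eq0.
exists (P *m U); split=> //.
- exists g, (mx2 1 0 0 lam^-1); split=> //.
    split; first by apply/intmx_mx2; split=> //; (apply: inO0 || apply: (inO1 hv)).
    exists (mx2 1 0 0 lam); first by apply/intmx_mx2; split=> //; (apply: inO0 || apply: (inO1 hv)).
    by rewrite mul_mx2 mx2_1; congr mx2; field_nz.
  have -> : (P *m U)^T *m B *m (P *m U) = U^T *m (P^T *m B *m P) *m U by rewrite trmx_mul !mulmxA.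
  rewrite hG tr_mx2 !mul_mx2 scale_mx2 hq'.
  by congr mx2; field_nz.
- move=> s /stabP [/(EndL_mxlatticeP hv _ Pu) [X hX eX]].
  move=> /(EndL_dual_mxlatticeP hv Bsym Bunit _ Pu) [Z hZ eZ].
  have eG : Z *m mx2 g (g * r) (g * r) (g * q) = mx2 g (g * r) (g * r) (g * q) *m X.
    by rewrite -hG mulmxA eZ -!mulmxA eX.
  have [Y hY eY] := completed_square_conj g0 t0 hq' hr tO hX hZ eG.
  by apply/(EndL_mxlatticeP hv _ PUu); exists Y => //; rewrite mulmxA eX -!mulmxA eY.
Qed.

Lemma hyperbolic_modular P t r1 r2 : stable_basis v B Ord P ->
  P^T *m B *m P = mx2 (t * r1) t t (t * r2) -> t != 0 -> Pp r1 -> Pp r2 ->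
  exists Q, modular_basis Q.
Proof.
move=> [Pu stabP] hG t0 h1 h2; exists P; split=> [//||s /stabP []//].
have [u0 uO] := inP_subr1_inv hv (inPM hv h1 (inP_inO h2)).
exists t, (mx2 r1 1 1 r2); split=> //; last by rewrite hG scale_mx2 mulr1.
split; first by apply/intmx_mx2; split; (apply: (inO1 hv) || apply: inP_inO).
set e := (r1 * r2 - 1)^-1 in uO; exists (mx2 (e * r2) (- e) (- e) (e * r1)).
  by apply/intmx_mx2; split; (apply: (inON hv) || apply/(inOM hv)/inP_inO).
by rewrite mul_mx2 mx2_1 /e; congr mx2; field_nz.
Qed.

Lemma exists_modular_basis P : stable_basis v B Ord P -> exists Q, modular_basis Q.
Proof.
move=> hP; have Gu : P^T *m B *m P \in unitmx by rewrite !unitmx_mul unitmx_tr hP.1 Bunit.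
have Gsym : (P^T *m B *m P)^T = P^T *m B *m P by rewrite !trmx_mul trmxK Bsym mulmxA.
set G := P^T *m B *m P in Gu Gsym.
set S := mx2 0 1 1 0 : 'M[F]_2.
have {}Gsym : G = mx2 (G ord0 ord0) (G ord0 ord_max) (G ord0 ord_max) (G ord_max ord_max).
  by move: Gsym; rewrite {1 2}(mx2E G) tr_mx2 => /mx2_inj [_ eb _ _]; rewrite {1}(mx2E G) eb.
have GS : (P *m S)^T *m B *m (P *m S) =
    mx2 (G ord_max ord_max) (G ord0 ord_max) (G ord0 ord_max) (G ord0 ord0).
  have -> : (P *m S)^T *m B *m (P *m S) = S^T *m G *m S by rewrite trmx_mul !mulmxA.
  by rewrite {1}Gsym /S tr_mx2 !mul_mx2; congr mx2; ring.
move: Gsym GS; move: (G ord0 ord0) (G ord0 ord_max) (G ord_max ord_max) => a b d hG hGS.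
have dG : a * d - b * b != 0 by rewrite -det_mx2 -hG -unitfE -unitmxE.
have hPS := stable_basis_unimodular unimodular_swap hP.
(* Either a diagonal entry of the Gram matrix divides the other two, and we complete
   the square, or b properly divides both a and d and the form is hyperbolic. *)
case: (inO_dvd_total hv a b) => [[r hr eb]|[r1 hr1 ea]].
  case: (inO_dvd_total hv a d) => [[q hq ed]|[r' hr' ea]].
    apply: (completed_square_modular hP (g := a) (r := r) (q := q)) => //.
      by rewrite -/G hG eb ed.
    by apply/eqP => a0; move/eqP: dG; apply; rewrite eb ed a0; ring.
  apply: (completed_square_modular hPS (g := d) (r := r' * r) (q := r')) => //.
  - by rewrite hGS eb ea mulrA.
  - by apply/eqP => d0; move/eqP: dG; apply; rewrite eb ea d0; ring.
  - exact/(inOM hv)/hr/inP_inO.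
  - exact: inP_inO.
case: (inO_dvd_total hv d b) => [[r hr ebd]|[r2 hr2 ed]].
  apply: (completed_square_modular hPS (g := d) (r := r) (q := r * r1)) => //.
  - by rewrite hGS ea ebd mulrA.
  - by apply/eqP => d0; move/eqP: dG; apply; rewrite ea ebd d0; ring.
  - exact/(inOM hv)/inP_inO.
apply: (hyperbolic_modular hP (t := b) (r1 := r1) (r2 := r2)) => //; first by rewrite -/G hG ea ed.
by apply/eqP => b0; move/eqP: dG; apply; rewrite ea ed b0; ring.
Qed.

End GramNormalisation.

Section ModularLattice.
Variables (F : fieldType) (v : F -> int).
Variables (B : 'M[F]_2) (inv : 'M[F]_2 -> 'M[F]_2).
Hypothesis adjB : forall s x y, bform B x (s *m y) = bform B (inv s *m x) y.
Variables (alpha : F) (L : 'cV[F]_2 -> Prop).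
Hypotheses (alpha0 : alpha != 0) (Lmod : modular v B alpha L).

Lemma modular_EndL_dual s : EndL L s -> EndL (dual_lattice v B L) s.
Proof.
move=> sL y hy; have /sL /Lmod [y' [hy' e]] : L (alpha *: y) by apply/Lmod; exists y.
by move: e; rewrite -scalemxAr => /(scalerI alpha0) ->.
Qed.

Lemma modular_EndL_inv s : EndL L s -> EndL L (inv s).
Proof.
move=> sL x /Lmod [y [hy ->]]; apply/Lmod; exists (inv s *m y); split; last by rewrite scalemxAr.
by move=> z hz; rewrite -adjB; apply/hy/sL.
Qed.

End ModularLattice.

Lemma gen_ideal_sub (F : fieldType) (v : F -> int) (S S' : F -> Prop) :
  (forall y, S y -> S' y) -> forall x, gen_ideal v S x -> gen_ideal v S' x.
Proof. by move=> SS' x [k [c [s [hc hs ->]]]]; exists k, c, s; split=> // i; apply/SS'/hs. Qed.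

Lemma disc_order_ext (F : fieldType) (v : F -> int) (O1 O2 : 'M[F]_2 -> Prop) :
  (forall s, O1 s <-> O2 s) -> forall x, disc_order v O1 x <-> disc_order v O2 x.
Proof.
by move=> e x; split; apply: gen_ideal_sub => y [a [ha ->]]; exists a; split=> // i; apply/e.
Qed.

Lemma ideal_mul_inO (F : fieldType) (v : F -> int) : is_dvaluation v ->
  forall x, ideal_mul v (inO v) (inO v) x <-> inO v x.
Proof.
move=> hv x; split=> [[k [c [s [hc hs ->]]]]|hx].
  apply: (big_ind (inO v)) => [|y z|i _]; [exact: inO0 | exact: (inOD hv) | ].
  by have [a [b [ha hb ->]]] := hs i; apply/(inOM hv)/(inOM hv).
exists 1%N, (fun _ => x), (fun _ => 1); split=> [_|_|]; rewrite ?big_ord1 ?mulr1 //.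
by exists 1, 1; rewrite mulr1; split=> //; apply: inO1.
Qed.

(* Conjugates of the matrix units span End(Q o^2), with a trace form of determinant -1. *)
Lemma disc_order_EndL_mxlattice (F : fieldType) (v : F -> int) (Q : 'M[F]_2) :
  is_dvaluation v -> Q \in unitmx ->
  forall x, disc_order v (EndL (mxlattice v Q)) x <-> inO v x.
Proof.
move=> hv Qu x; split=> [[k [c [s [hc hs ->]]]]|hx].
  apply: (big_ind (inO v)) => [|y z|i _]; [exact: inO0 | exact: (inOD hv) | apply: (inOM hv) => //].
  have [a [ha ->]] := hs i; apply: (intmx_det hv) => j l; rewrite mxE.
  have [Y hY eY] := (EndL_mxlatticeP hv _ Qu).1 (ha j).
  have [Y' hY' eY'] := (EndL_mxlatticeP hv _ Qu).1 (ha l).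
  by rewrite -[_ * _]/(a j *m a l) (mxtrace_conj Qu eY eY'); apply/(intmx_trace hv)/(intmx_mul hv).
exists 1%N, (fun _ => - x), (fun _ => -1); split=> [_|_|]; last by rewrite big_ord1 mulrNN mulr1.
  exact: inON.
exists (fun k => Q *m unit_mx2 k *m invmx Q); split=> [k|].
  apply/(EndL_mxlatticeP hv _ Qu); exists (unit_mx2 k); last by rewrite mulmxKV.
  by case: (ord4P k) => ->; apply/intmx_mx2; split; (apply: inO0 || apply: (inO1 hv)).
rewrite -(det_trace_form_unit_mx2 F); congr (\det _); apply/matrixP => j l; rewrite !mxE.
by rewrite -[_ * _]/(_ *m _) (mxtrace_conj Qu (mulmxKV Qu _) (mulmxKV Qu _)).
Qed.

Section MaximalOrder.
Variables (F : fieldType) (v : F -> int).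
Hypothesis hv : is_dvaluation v.
Variables (B : 'M[F]_2) (inv : 'M[F]_2 -> 'M[F]_2).
Hypotheses (Bsym : B^T = B) (invK : involutive inv).
Hypothesis adjB : forall s x y, bform B x (s *m y) = bform B (inv s *m x) y.
Variables (Q : 'M[F]_2) (c : F) (W : 'M[F]_2).
Hypotheses (Qu : Q \in unitmx) (c0 : c != 0) (Wunimod : unimodular v W).
Hypothesis gramQ : Q^T *m B *m Q = c *: W.

Lemma mxlattice_modular : modular v B c (mxlattice v Q).
Proof.
have [hW [W' hW' WW']] := Wunimod.
have QW'QtB : Q *m W' *m (Q^T *m B) = c *: 1%:M.
  have -> : Q^T *m B = (c *: W) *m invmx Q by rewrite -gramQ mulmxK.
  by rewrite -scalemxAl -scalemxAr !mulmxA -(mulmxA Q) (mulmx1C WW') mulmx1 mulmxV.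
move=> x; split=> [[z hz ->]|[y [/(dual_mxlatticeP hv _ _ Bsym) hy ->]]].
  exists (c^-1 *: (Q *m z)); split; last by rewrite scalerA mulfV // scale1r.
  apply/(dual_mxlatticeP hv _ _ Bsym).
  by rewrite -scalemxAr mulmxA gramQ -scalemxAl scalerA mulVf // scale1r; apply: intmx_mul.
exists (W' *m (Q^T *m B *m y)); first exact: intmx_mul.
by rewrite (mulmxA Q W') (mulmxA (Q *m W')) QW'QtB -scalemxAl mul1mx.
Qed.

Lemma EndL_mxlattice_inv_order : is_inv_order v inv (EndL (mxlattice v Q)).
Proof.
split=> [|s]; first exact: EndL_mxlattice_is_order.
have invN := modular_EndL_inv adjB mxlattice_modular.
by split=> [sN|[t [tN ->]]]; [exists (inv s); rewrite invK; split=> //; apply: invN | apply: invN].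
Qed.

Variable Ord : 'M[F]_2 -> Prop.
Hypotheses (Ordmax : is_max_inv_order v inv Ord) (OrdQ : forall s, Ord s -> EndL (mxlattice v Q) s).

Lemma max_inv_order_EndL s : Ord s <-> EndL (mxlattice v Q) s.
Proof.
split=> [|sN]; first exact: OrdQ.
by case: Ordmax => _ max; apply: (max _ EndL_mxlattice_inv_order OrdQ).
Qed.

Lemma max_inv_order_modular : exists alpha (L : 'cV[F]_2 -> Prop),
  [/\ alpha != 0, is_lattice v L, modular v B alpha L &
      forall s, Ord s <-> (EndL L s /\ EndL (dual_lattice v B L) s)].
Proof.
exists c, (mxlattice v Q); split=> //; [exact: mxlattice_is_lattice | exact: mxlattice_modular | ].
move=> s; rewrite max_inv_order_EndL; split=> [sN|[] //].
by split=> //; apply: modular_EndL_dual c0 mxlattice_modular _ sN.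
Qed.

Lemma max_inv_order_disc : is_reduced_disc v Ord (inO v).
Proof.
move=> x; rewrite ideal_mul_inO // -(disc_order_EndL_mxlattice hv Qu).
exact: disc_order_ext max_inv_order_EndL x.
Qed.

End MaximalOrder.

Section InvolutionDiscriminant.
Variable F : fieldType.

Lemma mxform_inj n (M N : 'M[F]_n) :
  (forall x y : 'cV[F]_n, (x^T *m M *m y) ord0 ord0 = (x^T *m N *m y) ord0 ord0) -> M = N.
Proof.
move=> eMN; apply/matrixP => i j; have := eMN (delta_mx i 0) (delta_mx j 0).
by rewrite trmx_delta -!colE -!rowE !mxE.
Qed.

Lemma adjoint_skew (inv : 'M[F]_2 -> 'M[F]_2) B h : B^T = B ->
  (forall s x y, bform B x (s *m y) = bform B (inv s *m x) y) -> inv h = - h ->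
  (B *m h)^T = - (B *m h).
Proof.
move=> Bsym adjB skew_h; rewrite trmx_mul Bsym; apply: mxform_inj => x y.
have trN (A : 'cV[F]_2) : (- A)^T = - A^T by apply/matrixP => i j; rewrite !mxE.
have oppE (M : 'M[F]_1) : (- M) ord0 ord0 = - M ord0 ord0 by rewrite mxE.
have := adjB h x y; rewrite !bformE skew_h mulNmx trN.
by rewrite trmx_mul !mulmxN !mulNmx !mulmxA !oppE => ->; rewrite opprK.
Qed.

Lemma skew_mx2E (K : 'M[F]_2) : (2 : F) != 0 -> K^T = - K ->
  K = mx2 0 (K ord0 ord_max) (- K ord0 ord_max) 0.
Proof.
move=> two0; rewrite [in X in X -> _](mx2E K) => /(mx2_skew (mulfI two0)) [a0 d0 cb].
by rewrite [LHS]mx2E a0 d0 cb.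
Qed.

Lemma in_disc_det_adjoint (inv : 'M[F]_2 -> 'M[F]_2) (B : 'M[F]_2) (lambda : F) :
  (2 : F) != 0 -> is_adjoint_form inv B -> in_disc inv lambda ->
  lambda != 0 /\ exists2 rho, rho != 0 & \det B = rho ^+ 2 / lambda.
Proof.
move=> two0 [Bsym Bu adjB] [h [h0 skew_h [mu [mu0 ->]]]].
have eK := skew_mx2E two0 (adjoint_skew Bsym adjB skew_h).
set k := (B *m h) ord0 ord_max in eK.
have k0 : k != 0.
  apply: contra_neq h0 => k0; rewrite -(mulKmx Bu h) eK k0 oppr0.
  apply/matrixP => i j; rewrite !mxE big_ord2 !mxE.
  by case: (ord2P j) => ->; rewrite /= !mulr0 addr0.
have detBh : \det B * \det h = k ^+ 2 by rewrite -det_mulmx eK det_mx2; ring.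
have dh0 : \det h != 0 by apply: contraTneq (expf_neq0 2 k0) => dh0; rewrite -detBh dh0 mulr0 eqxx.
split; first by rewrite mulf_neq0 ?expf_neq0.
exists (k * mu); first by rewrite mulf_neq0.
by rewrite exprMn -detBh; field_nz.
Qed.

End InvolutionDiscriminant.

Section DiscriminantValuation.
Variables (F : fieldType) (v : F -> int).
Hypothesis hv : is_dvaluation v.
Notation O := (inO v).
Notation Pp := (inP v).

Lemma in_disc_scale (inv : 'M[F]_2 -> 'M[F]_2) y c :
  in_disc inv y -> c != 0 -> in_disc inv (y * c ^+ 2).
Proof.
case=> h [h0 skew_h [mu [mu0 ->]]] c0; exists h; split=> //.
by exists (mu * c); split; [apply: mulf_neq0 | ring].
Qed.

(* Otherwise lambda / pi^2 would be an integral discriminant outside lambda o. *)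
Lemma iota_disc_dval_le1 (inv : 'M[F]_2 -> 'M[F]_2) lambda :
  in_disc inv lambda -> lambda != 0 ->
  (forall x, (exists c, O c /\ x = lambda * c) <-> iota_disc v inv x) -> v lambda <= 1.
Proof.
move=> dl lam0 hiota; have [_ _ [pi [pi0 vpi]]] := hv.
have pi20 : pi ^+ 2 != 0 by rewrite expf_neq0.
have vpi2 : v (pi ^+ 2)^-1 = -2 by rewrite (dvalV hv) // expr2 (dvalM hv) // vpi.
rewrite leNgt; apply/negP => vl.
have /hiota [c [hc ec]] : iota_disc v inv (lambda / pi ^+ 2).
  exists 1%N, (fun _ => 1), (fun _ => lambda / pi ^+ 2).
  split=> [_|_|]; rewrite ?big_ord1 ?mul1r //; first exact: inO1.
  split; first by rewrite -exprVn; apply: in_disc_scale; rewrite ?invr_eq0.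
  by right; rewrite (dvalM hv) ?invr_neq0 // vpi2; dval_lia v.
have {}ec : c = (pi ^+ 2)^-1 by apply: (mulfI lam0); rewrite -ec.
by move: hc; rewrite ec => /(inO_dval (invr_neq0 pi20)); rewrite vpi2.
Qed.

(* v (xi^2) is even, so it cannot cancel the valuation 1 of a. *)
Lemma dval_subr_sqr a xi : a != 0 -> v a = 1 -> a - xi ^+ 2 != 0 /\ v (a - xi ^+ 2) <= 1.
Proof.
move=> a0 va; have [->|xi0] := eqVneq xi 0; first by rewrite expr0n subr0 va.
have s0 : xi ^+ 2 != 0 by rewrite expf_neq0.
have vs : v (xi ^+ 2) = v xi + v xi by rewrite expr2 (dvalM hv).
have d0 : a - xi ^+ 2 != 0.
  rewrite subr_eq0; apply/eqP => ea.
  by move: vs; rewrite -ea va; dval_lia v.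
split=> //; rewrite leNgt; apply/negP => vd.
have := dvalD hv d0 s0; rewrite subrK => /(_ a0).
have nd0 : xi ^+ 2 - a != 0 by rewrite -opprB oppr_eq0.
have := dvalD hv a0 nd0; rewrite addrC subrK -opprB (dvalN hv) => /(_ s0).
by dval_lia v.
Qed.

Lemma qdefect_dval1 a : a != 0 -> v a = 1 -> forall x, qdefect v a x <-> Pp x.
Proof.
move=> a0 va x; split=> [/(_ 0) [c [hc ex]]|hx xi].
  rewrite expr0n subr0 in ex.
  have [c_0|c0] := eqVneq c 0; first by left; rewrite ex c_0 mulr0.
  have [->|x0] := eqVneq x 0; first by left.
  by right; rewrite ex (dvalM hv) // va; have := inO_dval c0 hc; dval_lia v.
have [d0 vd] := dval_subr_sqr xi a0 va.
exists (x / (a - xi ^+ 2)); split; last by rewrite mulrC divfK.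
have [->|x0] := eqVneq x 0; first by left; rewrite mul0r.
by right; rewrite (dvalM hv) ?invr_neq0 // (dvalV hv) //; have := inP_dval x0 hx; dval_lia v.
Qed.

Lemma disc_dval0 (inv : 'M[F]_2 -> 'M[F]_2) lambda :
  in_disc inv lambda -> lambda != 0 -> O lambda ->
  (forall x, (exists c, O c /\ x = lambda * c) <-> iota_disc v inv x) ->
  ~ (forall x, qdefect v (- lambda) x <-> Pp x) -> v lambda = 0.
Proof.
move=> dl lam0 lamO hiota hdef; have := iota_disc_dval_le1 dl lam0 hiota.
have := inO_dval lam0 lamO; have [vl1|] := eqVneq (v lambda) 1; last by dval_lia v.
by case: hdef; apply: qdefect_dval1; rewrite ?oppr_eq0 ?(dvalN hv).
Qed.

Lemma iota_disc_unit (inv : 'M[F]_2 -> 'M[F]_2) lambda : lambda != 0 -> v lambda = 0 ->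
  (forall x, (exists c, O c /\ x = lambda * c) <-> iota_disc v inv x) ->
  forall x, O x /\ iota_disc v inv x <-> O x.
Proof.
move=> lam0 vl hiota x; split=> [[] //|hx]; split=> //; apply/hiota.
by exists (lambda^-1 * x); rewrite mulVKf //; split=> //; apply/(inOM hv)/hx/(inO_invr hv).
Qed.

End DiscriminantValuation.

Unset Implicit Arguments.
Set Strict Implicit.

Theorem theorem7p3 (F : fieldType) (v : F -> int)
  (hF : is_nonarch_local_field v) (hdy : dyadic v)
  (inv : 'M[F]_2 -> 'M[F]_2) (hinv : is_orth_involution inv)
  (B : 'M[F]_2) (hB : is_adjoint_form inv B)
  (lambda : F) (hlam_disc : in_disc inv lambda) (hlam_o : inO v lambda)
  (hlam_iota : forall x, (exists c, inO v c /\ x = lambda * c) <-> iota_disc v inv x)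
  (hdef : ~ (forall x, qdefect v (- lambda) x <-> inP v x))
  (O : 'M[F]_2 -> Prop) (hO : is_max_inv_order v inv O) :
  (exists (alpha : F) (L : 'cV[F]_2 -> Prop),
      [/\ alpha != 0, is_lattice v L, modular v B alpha L &
          forall s, O s <-> (EndL L s /\ EndL (dual_lattice v B L) s)])
  /\ is_reduced_disc v O (inO v)
  /\ (forall x, (inO v x /\ iota_disc v inv x) <-> inO v x).
Proof.
have [[hv _ _] [two0 _]] := (hF, hdy).
have [[_ _ invK _] [Bsym Bunit adjB]] := (hinv, hB).
have [lam0 [rho rho0 detB]] := in_disc_det_adjoint two0 hB hlam_disc.
have vlam : v lambda = 0 := disc_dval0 hv hlam_disc lam0 hlam_o hlam_iota hdef.
have [P hP] := exists_stable_basis hv adjB hO.1.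
have [Q [Qu [c [W [c0 hW gramQ]]] OQ]] :=
  exists_modular_basis hv Bsym Bunit lam0 hlam_o (inO_invr hv lam0 vlam) rho0 detB hP.
have modularO := max_inv_order_modular hv Bsym invK adjB Qu c0 hW gramQ hO OQ.
have discO := max_inv_order_disc hv Bsym invK adjB Qu c0 hW gramQ hO OQ.
have iotaO := iota_disc_unit hv lam0 vlam hlam_iota.
by split; last split.
Qed.
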